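(* Let $A$ be a group and $A_1=A\setminus\{1\}$. Let $X=\{x_i\mid i\in I\}$ with $I$ totally ordered. Let $$B=\mathrm{sgp}\langle X\cup X^{-1}\mid R\rangle,\qquad R=\{x_p^{\varepsilon}x_q^{\delta}=x_q^{\delta}x_p^{\varepsilon},\ x_q^{\varepsilon}x_q^{-\varepsilon}=1\mid \varepsilon,\delta=\pm1,\ p>q,\ p,q\in I\},$$ which is the free abelian group on $X$. A group $G$ is a Schreier extension of $A$ by $B$ if and only if the following data exist: - a factor set $\{(x_p^{\varepsilon},x_q^{\delta})\mid \varepsilon,\delta=\pm1,\ p>q\}\subseteq A$; - automorphisms $\psi_x$ of $A$ for $x\in X\cup X^{-1}$, written $a^x=\psi_x(a)$ with $a^{xy}=\psi_y(\psi_x(a))$; such that the following equations hold in $A$: 1. $(x_p^{\varepsilon},x_q^{\delta})\,(x_p^{\varepsilon},x_r^{\gamma})^{x_q^{\delta}}\,(x_q^{\delta},x_r^{\gamma})=(x_q^{\delta},x_r^{\gamma})^{x_p^{\varepsilon}}\,(x_p^{\varepsilon},x_r^{\gamma})\,(x_p^{\varepsilon},x_q^{\delta})^{x_r^{\gamma}}$, for all $p>q>r$ and $\varepsilon,\delta,\gamma=\pm1$; 2. $(x_p^{\varepsilon},x_q^{-\delta})\,(x_p^{\varepsilon},x_q^{\delta})^{x_q^{-\delta}}=1$, for all $p>q$ and $\varepsilon,\delta=\pm1$; 3. $(x_p^{\varepsilon},x_q^{\delta})^{x_p^{-\varepsilon}}\,(x_p^{-\varepsilon},x_q^{\delta})=1$,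 for all $p>q$ and $\varepsilon,\delta=\pm1$; 4. $a^{x_q^{\delta}x_p^{\varepsilon}}\,(x_p^{\varepsilon},x_q^{\delta})=(x_p^{\varepsilon},x_q^{\delta})\,a^{x_p^{\varepsilon}x_q^{\delta}}$, for all $p>q$, $\varepsilon,\delta=\pm1$ and $a\in A$; 5. $a^{x_r^{\varepsilon}x_r^{-\varepsilon}}=a$, for all $r\in I$, $\varepsilon=\pm1$ and $a\in A$; and moreover $$G\cong\mathrm{sgp}\langle A_1\cup X\cup X^{-1}\mid S\rangle,$$ where $$S=\{aa'=[aa'],\ ax^{\varepsilon}=x^{\varepsilon}a^{x^{\varepsilon}},\ x_p^{\varepsilon}x_q^{\delta}=x_q^{\delta}x_p^{\varepsilon}(x_p^{\varepsilon},x_q^{\delta}),\ x_q^{\varepsilon}x_q^{-\varepsilon}=1\mid a,a'\in A_1,\ x\in X,\ \varepsilon,\delta=\pm1,\ p>q\}.$$ Here $[aa']$ is the product in $A$, and elements equal to $1$ are read as the empty word.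
   Context: Basic definitions: - A Schreier extension of $A$ by $B$ is a group containing (a copy of) $A$ as a normal subgroup with quotient isomorphic to $B$. - $\mathrm{sgp}\langle X\mid S\rangle$ denotes the monoid presented by generators $X$ and relations $S$. - $X^{-1}=\{x_i^{-1}\mid i\in I\}$ is a set of new letters. *)

From Stdlib Require Import List Classical ClassicalEpsilon.
Import ListNotations.


Record Group := {
  carrier :> Type;
  gmul : carrier -> carrier -> carrier;
  gone : carrier;
  ginv : carrier -> carrier;
  gmulA : forall x y z, gmul x (gmul y z) = gmul (gmul x y) z;
  gmul1l : forall x, gmul gone x = x;
  gmul1r : forall x, gmul x gone = x;
  gmulVl : forall x, gmul (ginv x) x = gone;
  gmulVr : forall x, gmul x (ginv x) = gone }.

Arguments gmul {g}. Arguments gone {g}. Arguments ginv {g}.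

Definition is_hom (G H : Group) (f : G -> H) : Prop :=
  forall x y, f (gmul x y) = gmul (f x) (f y).

Definition is_aut (A : Group) (f : A -> A) : Prop :=
  is_hom A A f /\ (forall x y, f x = f y -> x = y) /\ (forall y, exists x, f x = y).

Inductive cong (Gen : Type) (rel : list Gen -> list Gen -> Prop)
  : list Gen -> list Gen -> Prop :=
| cong_base : forall u l r v, rel l r -> cong Gen rel (u ++ l ++ v) (u ++ r ++ v)
| cong_refl : forall w, cong Gen rel w w
| cong_sym : forall w1 w2, cong Gen rel w1 w2 -> cong Gen rel w2 w1
| cong_trans : forall w1 w2 w3, cong Gen rel w1 w2 -> cong Gen rel w2 w3 -> cong Gen rel w1 w3.

(** [presents M Gen rel]: the monoid underlying the group M is isomorphic to
    the monoid sgp<Gen | rel> = (words over Gen) / (congruence generated by rel). *)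
Definition presents (M : Group) (Gen : Type) (rel : list Gen -> list Gen -> Prop)
  : Prop :=
  exists phi : list Gen -> M,
    phi [] = gone /\
    (forall u v, phi (u ++ v) = gmul (phi u) (phi v)) /\
    (forall m, exists w, phi w = m) /\
    (forall u v, phi u = phi v <-> cong Gen rel u v).

(** Letters of X ∪ X^{-1}: (i, true) is x_i, (i, false) is x_i^{-1}. *)
Definition letter (I : Type) := (I * bool)%type.

Definition relB (I : Type) (lt : I -> I -> Prop)
  (u v : list (letter I)) : Prop :=
  (exists p q e d, lt q p /\ u = [(p, e); (q, d)] /\ v = [(q, d); (p, e)])
  \/ (exists q e, u = [(q, e); (q, negb e)] /\ v = []).

Definition schreier_ext (A G : Group) (I : Type) (lt : I -> I -> Prop) : Prop :=
  exists (H : Group) (iota : A -> G) (pi : G -> H),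
    is_hom A G iota /\ (forall a b, iota a = iota b -> a = b) /\
    is_hom G H pi /\ (forall h, exists g, pi g = h) /\
    (forall g, pi g = gone <-> exists a, g = iota a) /\
    presents H (letter I) (relB I lt).

Definition genS (A : Group) (I : Type) : Type :=
  ({ a : A | a <> gone } + letter I)%type.

Definition wordA (A : Group) (I : Type) (a : A) : list (genS A I) :=
  match excluded_middle_informative (a = gone) with
  | left _ => []
  | right h => [inl (exist _ a h)]
  end.

(** Relations S. [fs p e q d] is the factor-set element (x_p^e, x_q^d);
    [psi i e] is the automorphism a |-> a^{x_i^e}. *)
Definition relS (A : Group) (I : Type) (lt : I -> I -> Prop)
  (fs : I -> bool -> I -> bool -> A) (psi : I -> bool -> A -> A)
  (u v : list (genS A I)) : Prop :=
  (exists (a a' : {a : A | a <> gone}),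
      u = [inl a; inl a'] /\ v = wordA A I (gmul (proj1_sig a) (proj1_sig a')))
  \/ (exists (a : {a : A | a <> gone}) i e,
      u = [inl a; inr (i, e)] /\ v = inr (i, e) :: wordA A I (psi i e (proj1_sig a)))
  \/ (exists p q e d, lt q p /\
      u = [inr (p, e); inr (q, d)] /\
      v = [inr (q, d); inr (p, e)] ++ wordA A I (fs p e q d))
  \/ (exists q e, u = [inr (q, e); inr (q, negb e)] /\ v = []).

(* A word over X ∪ X^{-1} is normal when the indices of its
   letters weakly increase and no letter is followed by its inverse; we store
   it reversed, so that the head of the list has the largest index.  Given a
   factor set [fs] and twisting maps [psi], inserting a letter into a normal
   form moves it left past the letters of larger index, collecting
   factor-set elements on the way.  This gives a right action of words over
   A_1 ∪ X ∪ X^{-1} on pairs (normal word, element of A), and conditions 1-5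
   say exactly that the defining relations S act trivially ([insert_comm],
   [insert_inv], [reduceS_cong]).  Hence every word is S-equivalent to its
   normal form ([nf_sound]), and two words are S-equivalent as soon as the
   letter parts of their normal forms are R-equivalent and their A-parts
   agree ([faithful_of_normal_forms]).

   (<=) If G is presented by S, then a ↦ [a] embeds A in G ([wordA_inj]),
   erasing the A-letters maps G onto the group presented by R
   ([presented_group]), and the kernel of this map is A ([word_split],
   [lift_congB]): this is [extension_of_presentation].
   (=>) Given the extension, lift each x_i to t_i ∈ G, let psi_x be
   conjugation by t_x and let fs be the commutators of the lifts.
   Conditions 1-5 are group identities in G pulled back along A → G
   ([commutator_conditions]); evaluating words in G is onto and, by the
   normal forms, faithful ([presents_by_commutators]). *)

From Stdlib Require Import List Bool Classical ClassicalEpsilon ProofIrrelevance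
  FunctionalExtensionality PropExtensionality.
Import ListNotations.

Section GroupFacts.
Variable G : Group.
Implicit Types x y z : G.

Lemma gmulA_r x y z : gmul (gmul x y) z = gmul x (gmul y z).
Proof. now rewrite gmulA. Qed.
Lemma gmulKV x y : gmul (ginv x) (gmul x y) = y.
Proof. now rewrite gmulA, gmulVl, gmul1l. Qed.
Lemma gmulVK x y : gmul x (gmul (ginv x) y) = y.
Proof. now rewrite gmulA, gmulVr, gmul1l. Qed.
Lemma gmul_cancel_l x y z : gmul x y = gmul x z -> y = z.
Proof. intro E. now rewrite <- (gmulKV x y), E, gmulKV. Qed.
Lemma ginv_unique x y : gmul x y = gone -> y = ginv x.
Proof. intro E. apply (gmul_cancel_l x). now rewrite E, gmulVr. Qed.
Lemma ginv_inv x : ginv (ginv x) = x.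
Proof. symmetry. apply ginv_unique, gmulVl. Qed.
Lemma ginv_one : ginv (@gone G) = gone.
Proof. symmetry. apply ginv_unique, gmul1l. Qed.
Lemma ginv_mul x y : ginv (gmul x y) = gmul (ginv y) (ginv x).
Proof. symmetry. apply ginv_unique. rewrite gmulA_r, gmulVK. apply gmulVr. Qed.
Lemma idem_one x : gmul x x = x -> x = gone.
Proof. intro E. apply (gmul_cancel_l x). now rewrite E, gmul1r. Qed.
End GroupFacts.

#[export] Hint Rewrite gmul1l gmul1r gmulVl gmulVr gmulA_r gmulKV gmulVK
  ginv_inv ginv_one ginv_mul : grp.

Lemma hom_one (A B : Group) (f : A -> B) : is_hom A B f -> f gone = gone.
Proof. intro h. apply idem_one. now rewrite <- h, gmul1l. Qed.
Lemma hom_inv (A B : Group) (f : A -> B) :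
  is_hom A B f -> forall x, f (ginv x) = ginv (f x).
Proof. intros h x. apply ginv_unique. now rewrite <- h, gmulVr, (hom_one _ _ f h). Qed.

Definition factor_conditions (A : Group) (I : Type) (lt : I -> I -> Prop)
  (fs : I -> bool -> I -> bool -> A) (psi : I -> bool -> A -> A) : Prop :=
  (forall i e, is_aut A (psi i e)) /\
  (forall p q r e d g, lt q p -> lt r q ->
     gmul (gmul (fs p e q d) (psi q d (fs p e r g))) (fs q d r g) =
     gmul (gmul (psi p e (fs q d r g)) (fs p e r g)) (psi r g (fs p e q d))) /\
  (forall p q e d, lt q p ->
     gmul (fs p e q (negb d)) (psi q (negb d) (fs p e q d)) = gone) /\
  (forall p q e d, lt q p ->
     gmul (psi p (negb e) (fs p e q d)) (fs p (negb e) q d) = gone) /\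
  (forall p q e d (a : A), lt q p ->
     gmul (psi p e (psi q d a)) (fs p e q d) =
     gmul (fs p e q d) (psi q d (psi p e a))) /\
  (forall r e (a : A), psi r (negb e) (psi r e a) = a).

Section Congruence.
Variable Gen : Type.
Variable rel : list Gen -> list Gen -> Prop.
Notation cg := (cong Gen rel).

Lemma cong_app u v s t : cg u v -> cg (s ++ u ++ t) (s ++ v ++ t).
Proof.
  induction 1 as [u l r v H | w | w1 w2 _ IH | w1 w2 w3 _ IH1 _ IH2].
  - replace (s ++ (u ++ l ++ v) ++ t) with ((s ++ u) ++ l ++ (v ++ t))
      by now rewrite !app_assoc.
    replace (s ++ (u ++ r ++ v) ++ t) with ((s ++ u) ++ r ++ (v ++ t))
      by now rewrite !app_assoc.
    now apply cong_base.
  - apply cong_refl.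
  - now apply cong_sym.
  - eapply cong_trans; eassumption.
Qed.
Lemma cong_appl u v t : cg u v -> cg (u ++ t) (v ++ t).
Proof. exact (cong_app u v [] t). Qed.
Lemma cong_appr u v s : cg u v -> cg (s ++ u) (s ++ v).
Proof. intro H. apply (cong_app u v s []) in H. now rewrite !app_nil_r in H. Qed.
Lemma cong_app2 u v u' v' : cg u v -> cg u' v' -> cg (u ++ u') (v ++ v').
Proof. intros. eapply cong_trans; [apply cong_appl | apply cong_appr]; eassumption. Qed.
Lemma cong_rel l r : rel l r -> cg l r.
Proof. intro H. pose proof (cong_base Gen rel [] l r [] H) as C. now rewrite !app_nil_r in C. Qed.
End Congruence.

(* A monoid presentation in which every generator g has an inverse generator
   [inv g] with g·inv g = 1 presents a group: the classes of words. *)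
Section PresentedGroup.
Variable Gen : Type.
Variable rel : list Gen -> list Gen -> Prop.
Variable inv : Gen -> Gen.
Hypothesis rel_inv : forall g, cong Gen rel [g; inv g] [].
Hypothesis inv_inv : forall g, inv (inv g) = g.
Notation cg := (cong Gen rel).

Definition winv (w : list Gen) := rev (map inv w).
Lemma winv_winv w : winv (winv w) = w.
Proof.
  unfold winv. rewrite map_rev, rev_involutive, map_map.
  induction w as [|g w IH]; simpl; [reflexivity | now rewrite inv_inv, IH].
Qed.
Lemma w_winv w : cg (w ++ winv w) [].
Proof.
  induction w as [|g w IH]; simpl. apply cong_refl.
  unfold winv in *. simpl. rewrite app_assoc.
  eapply cong_trans. apply (cong_app _ _ (w ++ rev (map inv w)) [] [g] [inv g]), IH.
  apply rel_inv.
Qed.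
Lemma winv_w w : cg (winv w ++ w) [].
Proof. rewrite <- (winv_winv w) at 2. apply w_winv. Qed.

Definition cls (w : list Gen) : list Gen -> Prop := cg w.
Definition Q := { P : list Gen -> Prop | exists w, P = cls w }.
Definition mk (w : list Gen) : Q := exist _ (cls w) (ex_intro _ w eq_refl).
Definition rep (q : Q) : list Gen :=
  proj1_sig (constructive_indefinite_description _ (proj2_sig q)).

Lemma mk_rep q : mk (rep q) = q.
Proof.
  destruct q as [P HP]. unfold rep, mk. simpl.
  destruct (constructive_indefinite_description _ _) as [w ->]. simpl.
  f_equal. apply proof_irrelevance.
Qed.
Lemma mk_eq u v : mk u = mk v <-> cg u v.
Proof.
  split.
  - intro H. apply (f_equal (@proj1_sig _ _)) in H. simpl in H.
    assert (Hv : cls v v) by apply cong_refl. now rewrite <- H in Hv.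
  - intro H. unfold mk. assert (E : cls u = cls v).
    { apply functional_extensionality; intro w. apply propositional_extensionality.
      unfold cls. split; intro.
      + eapply cong_trans. apply cong_sym. eassumption. assumption.
      + eapply cong_trans; eassumption. }
    generalize (ex_intro (fun w0 => cls u = cls w0) u eq_refl) as pf1.
    generalize (ex_intro (fun w0 => cls v = cls w0) v eq_refl) as pf2.
    rewrite E. intros. f_equal. apply proof_irrelevance.
Qed.
Lemma rep_mk w : cg (rep (mk w)) w.
Proof. apply mk_eq, mk_rep. Qed.

Definition qmul (a b : Q) := mk (rep a ++ rep b).
Definition qinv (a : Q) := mk (winv (rep a)).
Definition qone := mk [].
Lemma qmul_mk u v : qmul (mk u) (mk v) = mk (u ++ v).
Proof. apply mk_eq, cong_app2; apply rep_mk. Qed.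
Lemma mk_repl u w : mk (rep (mk u) ++ w) = mk (u ++ w).
Proof. apply mk_eq, cong_appl, rep_mk. Qed.
Lemma mk_repr u w : mk (w ++ rep (mk u)) = mk (w ++ u).
Proof. apply mk_eq, cong_appr, rep_mk. Qed.

Lemma qassoc x y z : qmul x (qmul y z) = qmul (qmul x y) z.
Proof. unfold qmul. now rewrite mk_repr, mk_repl, app_assoc. Qed.
Lemma q1l x : qmul qone x = x.
Proof. unfold qmul, qone. rewrite mk_repl. apply mk_rep. Qed.
Lemma q1r x : qmul x qone = x.
Proof. unfold qmul, qone. rewrite mk_repr, app_nil_r. apply mk_rep. Qed.
Lemma qVl x : qmul (qinv x) x = qone.
Proof. unfold qmul, qinv, qone. rewrite mk_repl. apply mk_eq, winv_w. Qed.
Lemma qVr x : qmul x (qinv x) = qone.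
Proof. unfold qmul, qinv, qone. rewrite mk_repr. apply mk_eq, w_winv. Qed.

Definition presented_group : Group :=
  {| carrier := Q; gmul := qmul; gone := qone; ginv := qinv;
     gmulA := qassoc; gmul1l := q1l; gmul1r := q1r; gmulVl := qVl; gmulVr := qVr |}.

Lemma presented_group_presents : presents presented_group Gen rel.
Proof.
  exists mk. split; [reflexivity|]. split; [|split].
  - intros u v. symmetry. apply qmul_mk.
  - intro m. exists (rep m). apply mk_rep.
  - apply mk_eq.
Qed.
End PresentedGroup.

Arguments mk {Gen rel}.
Arguments rep {Gen rel}.

Lemma app_pair {T : Type} (m : list T) (a b : T) W : m ++ [a; b] ++ W = (m ++ [a]) ++ [b] ++ W.
Proof. now rewrite <- app_assoc. Qed.

Section NormalForms.
Variable A : Group.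
Variable I : Type.
Variable lt : I -> I -> Prop.
Hypothesis lt_irrefl : forall i, ~ lt i i.
Hypothesis lt_trans : forall i j k, lt i j -> lt j k -> lt i k.
Hypothesis lt_total : forall i j, lt i j \/ i = j \/ lt j i.
Variable fs : I -> bool -> I -> bool -> A.
Variable psi : I -> bool -> A -> A.

Notation L := (letter I).
Notation gS := (genS A I).
Notation cS := (cong gS (relS A I lt fs psi)).
Notation cB := (cong L (relB I lt)).

Definition linv (x : L) : L := (fst x, negb (snd x)).
Definition fsl (y x : L) : A := fs (fst y) (snd y) (fst x) (snd x).
Definition psil (x : L) : A -> A := psi (fst x) (snd x).

(* [insert r x] = (r', a) where rev r' · a is the normal form of (rev r) · x:
   x moves left past the larger letters y, picking up (y, x) and getting
   twisted by psi_x, and then cancels against x^{-1} or stops. *)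
Fixpoint insert (r : list L) (x : L) : list L * A :=
  match r with
  | [] => ([x], gone)
  | y :: r' =>
    if excluded_middle_informative (lt (fst x) (fst y)) then
      (y :: fst (insert r' x), gmul (psil y (snd (insert r' x))) (fsl y x))
    else if excluded_middle_informative (y = linv x) then (r', gone)
    else (x :: r, gone)
  end.

(* [above y z]: z may be the next entry after y in a (reversed) normal form. *)
Definition above (y z : L) := lt (fst z) (fst y) \/ z = y.
Definition head_above (y : L) (r : list L) :=
  match r with [] => True | z :: _ => above y z end.
Fixpoint normal (r : list L) : Prop :=
  match r with [] => True | y :: r' => head_above y r' /\ normal r' end.

Lemma above_trans (x y z : L) : above x y -> above y z -> above x z.
Proof. unfold above. intros [h|h] [h'|h']; subst; eauto. Qed.
Lemma lt_asym i j : lt i j -> ~ lt j i.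
Proof. intros h h'. apply (lt_irrefl i). eauto. Qed.
Lemma linv_neq (x : L) : linv x <> x.
Proof. destruct x as [i []]; unfold linv; simpl; congruence. Qed.
Lemma linv_linv (x : L) : linv (linv x) = x.
Proof. destruct x as [i b]; unfold linv; simpl. now rewrite negb_involutive. Qed.

Lemma insert_gt (y : L) (r : list L) (x : L) : lt (fst x) (fst y) ->
  insert (y :: r) x = (y :: fst (insert r x), gmul (psil y (snd (insert r x))) (fsl y x)).
Proof. intro h. simpl. now destruct (excluded_middle_informative _). Qed.
Lemma insert_cancel (r : list L) (x : L) : insert (linv x :: r) x = (r, gone).
Proof.
  simpl. destruct (excluded_middle_informative _) as [h|_].
  - exfalso; exact (lt_irrefl _ h).
  - now destruct (excluded_middle_informative _).
Qed.
Lemma insert_cancel_inv (r : list L) (x : L) : insert (x :: r) (linv x) = (r, gone).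
Proof. pose proof (insert_cancel r (linv x)) as C. now rewrite linv_linv in C. Qed.
Lemma insert_stop (y : L) (r : list L) (x : L) :
  ~ lt (fst x) (fst y) -> y <> linv x -> insert (y :: r) x = (x :: y :: r, gone).
Proof.
  intros h h'. simpl.
  destruct (excluded_middle_informative _); [contradiction|].
  now destruct (excluded_middle_informative _).
Qed.
Lemma insert_front (r : list L) (x : L) : head_above x r -> insert r x = (x :: r, gone).
Proof.
  destruct r as [|y r]; simpl; [reflexivity|]. intro h. apply insert_stop.
  - destruct h as [h|h]; [now apply lt_asym | subst; apply lt_irrefl].
  - intro e. subst y. destruct h as [h|h]; [exact (lt_irrefl _ h) | exact (linv_neq _ h)].
Qed.

Lemma above_of_not (y x : L) : ~ lt (fst x) (fst y) -> y <> linv x -> above x y.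
Proof.
  destruct x as [q d], y as [p e]; simpl; intros h h'. unfold above; simpl.
  destruct (lt_total p q) as [l|[l|l]]; auto; [|contradiction].
  subst. right. destruct e, d; try reflexivity; exfalso; now apply h'.
Qed.
Lemma insert_head (y : L) (r : list L) (x : L) :
  head_above y r -> normal r -> above y x -> head_above y (fst (insert r x)).
Proof.
  destruct r as [|z r]; simpl; intros h s hx; [exact hx|].
  destruct (excluded_middle_informative _); [exact h|].
  destruct (excluded_middle_informative _); [|exact hx].
  destruct s as [s1 _]. destruct r as [|w r]; simpl; auto. now apply (above_trans y z w).
Qed.
Lemma insert_normal (r : list L) (x : L) : normal r -> normal (fst (insert r x)).
Proof.
  induction r as [|y r IH]; simpl; intro s; [now split|].
  destruct s as [s1 s2].
  destruct (excluded_middle_informative _) as [h|h].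
  - simpl. split; auto. apply insert_head; auto. now left.
  - destruct (excluded_middle_informative _) as [h'|h']; [exact s2|].
    simpl. split; auto. now apply above_of_not.
Qed.

Definition reduceB (w : list L) (r : list L) := fold_left (fun r x => fst (insert r x)) w r.

Lemma reduceB_rev (r : list L) : normal r -> reduceB (rev r) [] = r.
Proof.
  induction r as [|y r IH]; simpl; intros; [reflexivity|]. destruct H.
  unfold reduceB. rewrite fold_left_app. fold (reduceB (rev r) []).
  rewrite IH by auto. simpl. now rewrite insert_front.
Qed.

Hypothesis psi_hom : forall i e a b, psi i e (gmul a b) = gmul (psi i e a) (psi i e b).
Hypothesis cond1 : forall p q r e d g, lt q p -> lt r q ->
  gmul (gmul (fs p e q d) (psi q d (fs p e r g))) (fs q d r g) =
  gmul (gmul (psi p e (fs q d r g)) (fs p e r g)) (psi r g (fs p e q d)).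
Hypothesis cond2 : forall p q e d, lt q p ->
  gmul (fs p e q (negb d)) (psi q (negb d) (fs p e q d)) = gone.
Hypothesis cond3 : forall p q e d, lt q p ->
  gmul (psi p (negb e) (fs p e q d)) (fs p (negb e) q d) = gone.
Hypothesis cond4 : forall p q e d (a : A), lt q p ->
  gmul (psi p e (psi q d a)) (fs p e q d) = gmul (fs p e q d) (psi q d (psi p e a)).
Hypothesis cond5 : forall r e (a : A), psi r (negb e) (psi r e a) = a.

Lemma psil_hom x a b : psil x (gmul a b) = gmul (psil x a) (psil x b).
Proof. apply psi_hom. Qed.
Lemma psil_one x : psil x gone = gone.
Proof. apply idem_one. now rewrite <- psil_hom, gmul1l. Qed.
Lemma fsl_twist (x z : L) a r : lt (fst z) (fst x) ->
  gmul (fsl x z) (gmul (psil z (psil x a)) r) = gmul (psil x (psil z a)) (gmul (fsl x z) r).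
Proof. intro h. rewrite !gmulA. f_equal. symmetry. now apply cond4. Qed.

(* The algebraic identity, a consequence of conditions 1 and 4, behind the
   commutation of two insertions past a larger letter y. *)
Lemma insert_comm_step (y x z : L) c1 c2 c3 c4 :
  lt (fst x) (fst y) -> lt (fst z) (fst x) ->
  gmul c2 (psil z c1) = gmul (gmul c4 (psil x c3)) (fsl x z) ->
  gmul (gmul (psil y c2) (fsl y z)) (psil z (gmul (psil y c1) (fsl y x))) =
  gmul (gmul (gmul (psil y c4) (fsl y x)) (psil x (gmul (psil y c3) (fsl y z)))) (fsl x z).
Proof.
  intros hxy hzx H. assert (hzy : lt (fst z) (fst y)) by eauto.
  rewrite !psil_hom. autorewrite with grp.
  rewrite (fsl_twist y z c1 _ hzy), (fsl_twist y x c3 _ hxy).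
  rewrite gmulA, <- psil_hom, H, !psil_hom. autorewrite with grp.
  do 2 f_equal. pose proof (cond1 (fst y) (fst x) (fst z) (snd y) (snd x) (snd z) hxy hzx) as C.
  autorewrite with grp in C. symmetry; exact C.
Qed.

(* Inserting x then z equals inserting z then x and multiplying by (x, z):
   the relation x z = z x (x, z) acts trivially (conditions 1, 3, 4). *)
Lemma insert_comm (r : list L) : normal r -> forall x z : L, lt (fst z) (fst x) ->
  fst (insert (fst (insert r x)) z) = fst (insert (fst (insert r z)) x) /\
  gmul (snd (insert (fst (insert r x)) z)) (psil z (snd (insert r x))) =
  gmul (gmul (snd (insert (fst (insert r z)) x)) (psil x (snd (insert r z)))) (fsl x z).
Proof.
  induction r as [|y r IH]; intros s x z hzx.
  - change (insert [] x) with ([x], @gone A). change (insert [] z) with ([z], @gone A).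
    cbn [fst snd]. rewrite (insert_gt x [] z hzx), (insert_front [z] x) by (left; exact hzx).
    cbn [insert fst snd]. split; [reflexivity|]. rewrite !psil_one. now autorewrite with grp.
  - destruct s as [s1 s2].
    destruct (excluded_middle_informative (lt (fst x) (fst y))) as [hxy|hxy].
    + assert (hzy : lt (fst z) (fst y)) by eauto.
      rewrite (insert_gt y r x hxy), (insert_gt y r z hzy). cbn [fst snd].
      rewrite (insert_gt y _ z hzy), (insert_gt y _ x hxy). cbn [fst snd].
      destruct (IH s2 x z hzx) as [IH1 IH2]. split; [now f_equal|].
      now apply insert_comm_step.
    + destruct (excluded_middle_informative (y = linv x)) as [->|hy].
      * rewrite insert_cancel, (insert_gt (linv x) r z hzx). cbn [fst snd].
        rewrite insert_cancel. cbn [fst snd]. split; [reflexivity|].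
        rewrite psil_one, gmul1r, gmul1l, psil_hom.
        pose proof (cond5 (fst x) (negb (snd x)) (snd (insert r z))) as C5.
        rewrite negb_involutive in C5. fold (psil x) in C5.
        change (psi _ _) with (psil (linv x)) in C5. rewrite C5.
        pose proof (cond3 (fst x) (fst z) (negb (snd x)) (snd z) hzx) as C3.
        rewrite negb_involutive in C3.
        rewrite <- gmulA, <- (gmul1r _ (snd (insert r z))) at 1. f_equal. symmetry. exact C3.
      * rewrite (insert_stop y r x hxy hy). cbn [fst snd].
        rewrite (insert_gt x _ z hzx). cbn [fst snd].
        rewrite (insert_front (fst (insert (y :: r) z)) x).
        2:{ apply insert_head; [now apply above_of_not | simpl; now split | now left]. }
        cbn [fst snd]. split; [reflexivity|]. now rewrite psil_one, gmul1r, gmul1l.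
Qed.

(* Inserting x then x^{-1} does nothing: the relation x x^{-1} = 1 acts
   trivially (conditions 2 and 4). *)
Lemma insert_inv (r : list L) : normal r -> forall x : L,
  fst (insert (fst (insert r x)) (linv x)) = r /\
  gmul (snd (insert (fst (insert r x)) (linv x))) (psil (linv x) (snd (insert r x))) = gone.
Proof.
  induction r as [|y r IH]; intros s x.
  - change (insert [] x) with ([x], @gone A). cbn [fst snd]. rewrite insert_cancel_inv. cbn [fst snd].
    split; [reflexivity|]. now rewrite psil_one, gmul1l.
  - destruct s as [s1 s2].
    destruct (excluded_middle_informative (lt (fst x) (fst y))) as [hxy|hxy].
    + rewrite (insert_gt y r x hxy). cbn [fst snd].
      rewrite (insert_gt y _ (linv x) hxy). cbn [fst snd].
      destruct (IH s2 x) as [IH1 IH2]. split; [now f_equal|].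
      rewrite !psil_hom. autorewrite with grp.
      rewrite (fsl_twist y (linv x) (snd (insert r x)) _ hxy).
      rewrite gmulA, <- psil_hom, IH2, psil_one, gmul1l.
      exact (cond2 (fst y) (fst x) (snd y) (snd x) hxy).
    + destruct (excluded_middle_informative (y = linv x)) as [->|hy].
      * rewrite insert_cancel. cbn [fst snd]. rewrite (insert_front r (linv x) s1).
        cbn [fst snd]. split; [reflexivity|]. now rewrite psil_one, gmul1l.
      * rewrite (insert_stop y r x hxy hy). cbn [fst snd]. rewrite insert_cancel_inv.
        cbn [fst snd]. split; [reflexivity|]. now rewrite psil_one, gmul1l.
Qed.

Lemma wordA_one : wordA A I gone = [].
Proof. unfold wordA. now destruct (excluded_middle_informative _). Qed.
Lemma wordA_ne (a : A) (h : a <> gone) : wordA A I a = [inl (exist _ a h)].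
Proof.
  unfold wordA. destruct (excluded_middle_informative _); [contradiction|].
  do 3 f_equal. apply proof_irrelevance.
Qed.
Lemma wordA_sig (a : {a : A | a <> gone}) : wordA A I (proj1_sig a) = [inl a].
Proof. destruct a as [a h]. apply wordA_ne. Qed.

Lemma wordA_mul (a b : A) : cS (wordA A I a ++ wordA A I b) (wordA A I (gmul a b)).
Proof.
  destruct (classic (a = gone)) as [->|ha]; [rewrite wordA_one, gmul1l; apply cong_refl|].
  destruct (classic (b = gone)) as [->|hb].
  { rewrite wordA_one, gmul1r, app_nil_r. apply cong_refl. }
  rewrite (wordA_ne a ha), (wordA_ne b hb). apply cong_rel. left.
  now exists (exist _ a ha), (exist _ b hb).
Qed.
Lemma wordA_letter (a : A) (x : L) : cS (wordA A I a ++ [inr x]) ([inr x] ++ wordA A I (psil x a)).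
Proof.
  destruct (classic (a = gone)) as [->|ha]; [rewrite psil_one, wordA_one; apply cong_refl|].
  rewrite (wordA_ne a ha). apply cong_rel. right; left.
  exists (exist _ a ha), (fst x), (snd x). now destruct x.
Qed.
Lemma wordA_past (u : list L) (a : A) :
  exists a', cS (wordA A I a ++ map inr u) (map inr u ++ wordA A I a').
Proof.
  revert a. induction u as [|x u IH]; intro a.
  { exists a. rewrite app_nil_r. apply cong_refl. }
  destruct (IH (psil x a)) as [a' H]. exists a'.
  change (map (@inr {a : A | a <> gone} L) (x :: u)) with ([@inr {a : A | a <> gone} L x] ++ map inr u).
  rewrite app_assoc. eapply cong_trans; [apply cong_appl, wordA_letter|].
  rewrite <- !app_assoc. now apply cong_appr.
Qed.
Lemma cS_letter_inv (x : L) : cS [inr x; inr (linv x)] [].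
Proof. apply cong_rel. right; right; right. exists (fst x), (snd x). now destruct x. Qed.
Lemma cS_inv_letter (x : L) : cS [inr (linv x); inr x] [].
Proof. pose proof (cS_letter_inv (linv x)) as C. now rewrite linv_linv in C. Qed.

Lemma insert_sound (r : list L) (x : L) :
  cS (map inr (rev r) ++ [inr x])
     (map inr (rev (fst (insert r x))) ++ wordA A I (snd (insert r x))).
Proof.
  induction r as [|y r IH]; [simpl; rewrite wordA_one; apply cong_refl|].
  destruct (excluded_middle_informative (lt (fst x) (fst y))) as [hxy|hxy].
  - rewrite (insert_gt y r x hxy). cbn [fst snd rev]. rewrite !map_app, <- app_assoc.
    eapply cong_trans.
    { apply cong_appr, cong_rel. right; right; left.
      exists (fst y), (fst x), (snd y), (snd x). destruct x, y. now split. }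
    rewrite app_pair. eapply cong_trans; [apply cong_appl, IH|].
    rewrite <- !app_assoc. apply cong_appr. rewrite app_assoc.
    eapply cong_trans; [apply cong_appl, wordA_letter|].
    rewrite <- app_assoc. apply cong_appr, wordA_mul.
  - destruct (excluded_middle_informative (y = linv x)) as [->|hy].
    + rewrite insert_cancel. cbn [fst snd rev].
      rewrite wordA_one, app_nil_r, map_app, <- app_assoc.
      rewrite <- (app_nil_r (map inr (rev r))) at 2. apply cong_appr, cS_inv_letter.
    + rewrite (insert_stop y r x hxy hy). cbn [fst snd rev].
      rewrite wordA_one, app_nil_r, !map_app. apply cong_refl.
Qed.

Definition step (g : gS) (n : list L * A) : list L * A :=
  match g with
  | inl a => (fst n, gmul (snd n) (proj1_sig a))
  | inr x => (fst (insert (fst n) x), gmul (snd (insert (fst n) x)) (psil x (snd n)))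
  end.
Definition reduceS (w : list gS) (n : list L * A) := fold_left (fun n g => step g n) w n.

Lemma reduceS_app u v n : reduceS (u ++ v) n = reduceS v (reduceS u n).
Proof. apply fold_left_app. Qed.
Lemma reduceS_wordA (a : A) n : reduceS (wordA A I a) n = (fst n, gmul (snd n) a).
Proof.
  destruct (classic (a = gone)) as [->|ha].
  - rewrite wordA_one, gmul1r. now destruct n.
  - now rewrite (wordA_ne a ha).
Qed.
Lemma reduceS_normal w : forall n, normal (fst n) -> normal (fst (reduceS w n)).
Proof.
  induction w as [|[a|x] w IH]; intros n h; [exact h | apply IH, h |].
  apply IH, insert_normal, h.
Qed.

Lemma reduceS_rel u v n :
  relS A I lt fs psi u v -> normal (fst n) -> reduceS u n = reduceS v n.
Proof.
  destruct n as [r b]. intros H hs. simpl in hs.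
  destruct H as [[a [a' [-> ->]]] | [[a [i [e [-> ->]]]] | [[p [q [e [d [hqp [-> ->]]]]]] | [q [e [-> ->]]]]]].
  - rewrite reduceS_wordA. simpl. now rewrite gmulA.
  - change (inr (i, e) :: wordA A I (psi i e (proj1_sig a)))
      with ([inr (i, e)] ++ wordA A I (psi i e (proj1_sig a))).
    rewrite reduceS_app, reduceS_wordA. simpl. unfold psil; simpl. now rewrite psi_hom, gmulA.
  - rewrite reduceS_app, reduceS_wordA. simpl.
    destruct (insert_comm r hs (p, e) (q, d) hqp) as [E1 E2]. f_equal; [exact E1|].
    rewrite !psil_hom, gmulA, E2. change (fs p e q d) with (fsl (p, e) (q, d)).
    autorewrite with grp. do 2 f_equal. symmetry. now apply cond4.
  - simpl. destruct (insert_inv r hs (q, e)) as [E1 E2]. unfold linv in E1, E2. simpl in E1, E2.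
    f_equal; [exact E1|]. rewrite psil_hom, gmulA, E2, gmul1l. apply cond5.
Qed.
Lemma reduceS_cong u v : cS u v -> forall n, normal (fst n) -> reduceS u n = reduceS v n.
Proof.
  induction 1 as [u l r v H | w | w1 w2 _ IH | w1 w2 w3 _ IH1 _ IH2]; intros n hn.
  - rewrite !reduceS_app. f_equal. apply reduceS_rel; [exact H | now apply reduceS_normal].
  - reflexivity.
  - symmetry. auto.
  - rewrite IH1 by exact hn. auto.
Qed.

Lemma reduceB_app u v r : reduceB u (reduceB v r) = reduceB (v ++ u) r.
Proof. unfold reduceB. now rewrite fold_left_app. Qed.
Lemma reduceB_normal w : forall r, normal r -> normal (reduceB w r).
Proof. induction w as [|x w IH]; intros r h; [exact h | apply IH, insert_normal, h]. Qed.
Lemma reduceB_cong u v : cB u v -> forall r, normal r -> reduceB u r = reduceB v r.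
Proof.
  induction 1 as [u l r v H | w | w1 w2 _ IH | w1 w2 w3 _ IH1 _ IH2]; intros r0 hr.
  - rewrite <- !reduceB_app. f_equal.
    pose proof (reduceB_normal u r0 hr) as hu.
    destruct H as [[p [q [e [d [hqp [-> ->]]]]]] | [q [e [-> ->]]]].
    + exact (proj1 (insert_comm _ hu (p, e) (q, d) hqp)).
    + exact (proj1 (insert_inv _ hu (q, e))).
  - reflexivity.
  - symmetry. auto.
  - rewrite IH1 by exact hr. auto.
Qed.

Definition nf (u : list gS) : list L * A := reduceS u ([], gone).
Definition nf_word (n : list L * A) : list gS := map inr (rev (fst n)) ++ wordA A I (snd n).

Lemma nf_sound u : cS u (nf_word (nf u)).
Proof.
  unfold nf, nf_word. induction u as [|g u IH] using rev_ind.
  { simpl. rewrite wordA_one. apply cong_refl. }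
  rewrite reduceS_app. destruct (reduceS u ([], gone)) as [r b]. simpl in IH |- *.
  eapply cong_trans; [apply cong_appl, IH|]. rewrite <- app_assoc.
  destruct g as [a|x]; simpl.
  - apply cong_appr. rewrite <- wordA_sig. apply wordA_mul.
  - eapply cong_trans; [apply cong_appr, wordA_letter|]. rewrite app_assoc.
    eapply cong_trans; [apply cong_appl, insert_sound|].
    rewrite <- app_assoc. apply cong_appr, wordA_mul.
Qed.

Lemma faithful_of_normal_forms (K : Type) (f : list gS -> K) :
  (forall u v, cS u v -> f u = f v) ->
  (forall r r' a a', f (map inr r ++ wordA A I a) = f (map inr r' ++ wordA A I a') -> cB r r') ->
  (forall r a a', f (map inr r ++ wordA A I a) = f (map inr r ++ wordA A I a') -> a = a') ->
  forall u v, f u = f v -> cS u v.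
Proof.
  intros sound separate_letters separate_A u v E.
  pose proof (nf_sound u) as Nu. pose proof (nf_sound v) as Nv.
  pose proof (reduceS_normal u ([], gone) Logic.I) as Su.
  pose proof (reduceS_normal v ([], gone) Logic.I) as Sv.
  unfold nf, nf_word in *.
  destruct (reduceS u ([], gone)) as [ru au], (reduceS v ([], gone)) as [rv av]. simpl in *.
  rewrite (sound _ _ Nu), (sound _ _ Nv) in E.
  pose proof (reduceB_cong _ _ (separate_letters _ _ _ _ E) [] Logic.I) as Er.
  rewrite !reduceB_rev in Er by assumption. subst rv.
  rewrite (separate_A _ _ _ E) in Nu.
  eapply cong_trans; [exact Nu | apply cong_sym, Nv].
Qed.

Lemma wordA_inj (a b : A) : cS (wordA A I a) (wordA A I b) -> a = b.
Proof.
  intro E. pose proof (reduceS_cong _ _ E ([], gone) Logic.I) as E'.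
  rewrite !reduceS_wordA in E'. simpl in E'. rewrite !gmul1l in E'. congruence.
Qed.

Fixpoint projw (w : list gS) : list L :=
  match w with
  | [] => []
  | inl _ :: w => projw w
  | inr x :: w => x :: projw w
  end.

Lemma projw_app (u v : list gS) : projw (u ++ v) = projw u ++ projw v.
Proof. induction u as [|[a|x] u IH]; simpl; auto. now rewrite IH. Qed.
Lemma projw_wordA (a : A) : projw (wordA A I a) = [].
Proof. unfold wordA. now destruct (excluded_middle_informative _). Qed.
Lemma projw_map (u : list L) : projw (map inr u) = u.
Proof. induction u; simpl; congruence. Qed.

Lemma projw_cong (u v : list gS) : cS u v -> cB (projw u) (projw v).
Proof.
  induction 1 as [u l r v H | w | w1 w2 _ IH | w1 w2 w3 _ IH1 _ IH2].
  - rewrite !projw_app. apply cong_app.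
    destruct H as [[a [a' [-> ->]]] | [[a [i [e [-> ->]]]] | [[p [q [e [d [hqp [-> ->]]]]]] | [q [e [-> ->]]]]]];
      simpl; rewrite ?projw_wordA; try apply cong_refl.
    + apply cong_rel. left. now exists p, q, e, d.
    + apply cong_rel. right. now exists q, e.
  - apply cong_refl.
  - now apply cong_sym.
  - eapply cong_trans; eassumption.
Qed.

Lemma word_split (w : list gS) : exists a, cS w (map inr (projw w) ++ wordA A I a).
Proof.
  induction w as [|[b|x] w [a Ha]].
  - exists gone. rewrite wordA_one. apply cong_refl.
  - destruct (wordA_past (projw w) (proj1_sig b)) as [a' Ha']. exists (gmul a' a). simpl.
    change (inl b :: w) with ([inl b] ++ w). rewrite <- wordA_sig.
    eapply cong_trans; [apply cong_appr, Ha|]. rewrite app_assoc.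
    eapply cong_trans; [apply cong_appl, Ha'|]. rewrite <- app_assoc. apply cong_appr, wordA_mul.
  - exists a. exact (cong_appr _ _ _ _ [inr x] Ha).
Qed.

Lemma lift_relB (l r v : list L) : relB I lt l r ->
  exists a, cS (map inr l ++ map inr v) (map inr r ++ map inr v ++ wordA A I a).
Proof.
  intros [[p [q [e [d [hqp [-> ->]]]]]] | [q [e [-> ->]]]].
  - destruct (wordA_past v (fs p e q d)) as [a Ha]. exists a.
    eapply cong_trans.
    + apply cong_appl, cong_rel. right; right; left. now exists p, q, e, d.
    + rewrite <- app_assoc. exact (cong_appr _ _ _ _ [inr (q, d); inr (p, e)] Ha).
  - exists gone. rewrite wordA_one, app_nil_r. exact (cong_appl _ _ _ _ (map inr v) (cS_letter_inv (q, e))).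
Qed.

Lemma lift_congB (w1 w2 : list L) : cB w1 w2 ->
  exists a, cS (map inr w1) (map inr w2 ++ wordA A I a).
Proof.
  induction 1 as [u l r v H | w | w1 w2 _ [a Ha] | w1 w2 w3 _ [a Ha] _ [b Hb]].
  - destruct (lift_relB l r v H) as [a Ha]. exists a.
    rewrite !map_app, <- !app_assoc. now apply cong_appr.
  - exists gone. rewrite wordA_one, app_nil_r. apply cong_refl.
  - exists (ginv a).
    eapply cong_trans; [|apply cong_appl, cong_sym, Ha].
    rewrite <- app_assoc. rewrite <- (app_nil_r (map inr w2)) at 1. apply cong_appr.
    eapply cong_trans; [|apply cong_sym, wordA_mul]. rewrite gmulVr, wordA_one. apply cong_refl.
  - exists (gmul b a). eapply cong_trans; [exact Ha|].
    eapply cong_trans; [apply cong_appl, Hb|]. rewrite <- app_assoc. apply cong_appr, wordA_mul.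
Qed.

Lemma relB_inv (x : L) : cB [x; linv x] [].
Proof. apply cong_rel. right. exists (fst x), (snd x). now destruct x. Qed.

Lemma extension_of_presentation (G : Group) :
  presents G gS (relS A I lt fs psi) -> schreier_ext A G I lt.
Proof.
  intros [phi [_ [phi_app [phi_surj phi_ker]]]].
  pose (B := presented_group L (relB I lt) linv relB_inv linv_linv).
  pose (iota := fun a : A => phi (wordA A I a)).
  destruct (choice (fun g w => phi w = g) phi_surj) as [word_of word_of_spec].
  pose (pi := fun g : G => (mk (projw (word_of g)) : B)).
  assert (pi_phi : forall w, pi (phi w) = mk (projw w)).
  { intro w. apply mk_eq, projw_cong, phi_ker, word_of_spec. }
  clearbody pi.
  assert (iota_hom : is_hom A G iota).
  { intros a b. unfold iota. rewrite <- phi_app. apply phi_ker, cong_sym, wordA_mul. }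
  exists B, iota, pi. split; [exact iota_hom|]. split; [|split; [|split; [|split]]].
  - intros a b E. apply wordA_inj, phi_ker, E.
  - intros g h. rewrite <- (word_of_spec g), <- (word_of_spec h), <- phi_app, !pi_phi.
    rewrite projw_app. symmetry. apply qmul_mk.
  - intro q. exists (phi (map inr (rep q))). rewrite pi_phi, projw_map. apply mk_rep.
  - intro g. rewrite <- (word_of_spec g), pi_phi. split.
    + intro E. apply mk_eq in E.
      destruct (word_split (word_of g)) as [a Ha], (lift_congB _ _ E) as [a' Ha'].
      exists (gmul a' a). rewrite iota_hom. unfold iota. rewrite <- phi_app. apply phi_ker.
      eapply cong_trans; [exact Ha | apply cong_appl, Ha'].
    + intros [a E]. rewrite <- pi_phi, E. unfold iota. now rewrite pi_phi, projw_wordA.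
  - apply presented_group_presents.
Qed.
End NormalForms.

Lemma extension_of_conditions (A G : Group) (I : Type) (lt : I -> I -> Prop)
  (lt_irrefl : forall i, ~ lt i i)
  (lt_trans : forall i j k, lt i j -> lt j k -> lt i k)
  (lt_total : forall i j, lt i j \/ i = j \/ lt j i)
  (fs : I -> bool -> I -> bool -> A) (psi : I -> bool -> A -> A) :
  factor_conditions A I lt fs psi -> presents G (genS A I) (relS A I lt fs psi) ->
  schreier_ext A G I lt.
Proof.
  intros [aut [c1 [c2 [c3 [c4 c5]]]]].
  eapply extension_of_presentation; try eassumption.
  intros i e. apply (proj1 (aut i e)).
Qed.

Section ExtensionData.
Variables (A G H : Group) (I : Type) (lt : I -> I -> Prop).
Hypothesis lt_irrefl : forall i, ~ lt i i.
Hypothesis lt_trans : forall i j k, lt i j -> lt j k -> lt i k.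
Hypothesis lt_total : forall i j, lt i j \/ i = j \/ lt j i.
Variables (iota : A -> G) (pi : G -> H) (phiH : list (letter I) -> H).
Hypothesis iota_hom : is_hom A G iota.
Hypothesis iota_inj : forall a b, iota a = iota b -> a = b.
Hypothesis pi_hom : is_hom G H pi.
Hypothesis pi_surj : forall h, exists g, pi g = h.
Hypothesis pi_ker : forall g, pi g = gone <-> exists a, g = iota a.
Hypothesis phiH_nil : phiH [] = gone.
Hypothesis phiH_app : forall u v, phiH (u ++ v) = gmul (phiH u) (phiH v).
Hypothesis phiH_surj : forall h, exists w, phiH w = h.
Hypothesis phiH_ker : forall u v, phiH u = phiH v <-> cong (letter I) (relB I lt) u v.

Notation gS := (genS A I).

Definition lift_gen (i : I) : G :=
  proj1_sig (constructive_indefinite_description _ (pi_surj (phiH [(i, true)]))).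
Definition lift (x : letter I) : G :=
  if snd x then lift_gen (fst x) else ginv (lift_gen (fst x)).
Definition preimage (g : G) : A :=
  match excluded_middle_informative (exists a, g = iota a) with
  | left h => proj1_sig (constructive_indefinite_description _ h)
  | right _ => gone
  end.
Definition conj_aut (i : I) (e : bool) (a : A) : A :=
  preimage (gmul (ginv (lift (i, e))) (gmul (iota a) (lift (i, e)))).
Definition commutator_fs (p : I) (e : bool) (q : I) (d : bool) : A :=
  preimage (gmul (ginv (lift (p, e)))
    (gmul (ginv (lift (q, d))) (gmul (lift (p, e)) (lift (q, d))))).

Lemma lift_neg i e : lift (i, negb e) = ginv (lift (i, e)).
Proof. destruct e; unfold lift; simpl; [reflexivity | now rewrite ginv_inv]. Qed.
Lemma pi_lift x : pi (lift x) = phiH [x].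
Proof.
  assert (lift_true : forall i, pi (lift_gen i) = phiH [(i, true)]).
  { intro i. unfold lift_gen. now destruct (constructive_indefinite_description _ _). }
  destruct x as [i []]; unfold lift; simpl; [apply lift_true|].
  rewrite (hom_inv _ _ _ pi_hom), lift_true. symmetry. apply ginv_unique.
  rewrite <- phiH_app, <- phiH_nil. apply phiH_ker, cong_rel. right. now exists i, true.
Qed.
Lemma iota_preimage g : pi g = gone -> iota (preimage g) = g.
Proof.
  intro hg. apply pi_ker in hg. unfold preimage.
  destruct (excluded_middle_informative _) as [h|h]; [|contradiction].
  destruct (constructive_indefinite_description _ _). now symmetry.
Qed.

Lemma iota_conj i e a :
  iota (conj_aut i e a) = gmul (ginv (lift (i, e))) (gmul (iota a) (lift (i, e))).
Proof.
  apply iota_preimage. rewrite !pi_hom, (hom_inv _ _ _ pi_hom).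
  assert (Ha : pi (iota a) = gone) by (apply pi_ker; eauto). rewrite Ha. now autorewrite with grp.
Qed.
(* Since x_p x_q = x_q x_p in B, the commutator of the lifts lies in A. *)
Lemma iota_commutator p e q d : lt q p ->
  iota (commutator_fs p e q d) =
  gmul (ginv (lift (p, e))) (gmul (ginv (lift (q, d))) (gmul (lift (p, e)) (lift (q, d)))).
Proof.
  intro hqp. apply iota_preimage. rewrite !pi_hom, !(hom_inv _ _ _ pi_hom), !pi_lift.
  set (x := (p, e) : letter I). set (z := (q, d) : letter I).
  assert (C : gmul (phiH [x]) (phiH [z]) = gmul (phiH [z]) (phiH [x])).
  { rewrite <- !phiH_app. apply phiH_ker, cong_rel. left. now exists p, q, e, d. }
  rewrite C. now autorewrite with grp.
Qed.

Lemma conj_aut_is_aut i e : is_aut A (conj_aut i e).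
Proof.
  split; [|split].
  - intros a b. apply iota_inj. rewrite iota_hom, !iota_conj, iota_hom. now autorewrite with grp.
  - intros a b E. apply (f_equal iota) in E. rewrite !iota_conj in E. apply iota_inj.
    apply (f_equal (fun z => gmul (lift (i, e)) (gmul z (ginv (lift (i, e)))))) in E.
    now autorewrite with grp in E.
  - intro b. exists (preimage (gmul (lift (i, e)) (gmul (iota b) (ginv (lift (i, e)))))).
    apply iota_inj. rewrite iota_conj, iota_preimage; [now autorewrite with grp|].
    rewrite !pi_hom, (hom_inv _ _ _ pi_hom).
    assert (Hb : pi (iota b) = gone) by (apply pi_ker; eauto). rewrite Hb. now autorewrite with grp.
Qed.

(* Conditions 1-5 hold: each is a group identity among the lifts in G. *)
Lemma commutator_conditions : factor_conditions A I lt commutator_fs conj_aut.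
Proof.
  split; [exact conj_aut_is_aut|]. split; [|split; [|split; [|split]]].
  - intros p q r e d g hqp hrq. assert (hrp : lt r p) by eauto. apply iota_inj.
    rewrite !iota_hom, !iota_conj, !iota_commutator by assumption. now autorewrite with grp.
  - intros p q e d hqp. apply iota_inj.
    rewrite iota_hom, iota_conj, !iota_commutator, (hom_one _ _ _ iota_hom), !lift_neg by exact hqp.
    now autorewrite with grp.
  - intros p q e d hqp. apply iota_inj.
    rewrite iota_hom, iota_conj, !iota_commutator, (hom_one _ _ _ iota_hom), !lift_neg by exact hqp.
    now autorewrite with grp.
  - intros p q e d a hqp. apply iota_inj.
    rewrite !iota_hom, !iota_conj, !iota_commutator by exact hqp. now autorewrite with grp.
  - intros r e a. apply iota_inj. rewrite !iota_conj, lift_neg. now autorewrite with grp.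
Qed.

Definition eval_gen (g : gS) : G :=
  match g with inl a => iota (proj1_sig a) | inr x => lift x end.
Definition evalG (w : list gS) : G := fold_right (fun g r => gmul (eval_gen g) r) gone w.

Lemma evalG_app u v : evalG (u ++ v) = gmul (evalG u) (evalG v).
Proof. induction u as [|g u IH]; simpl; [now rewrite gmul1l | now rewrite IH, gmulA]. Qed.
Lemma evalG_wordA a : evalG (wordA A I a) = iota a.
Proof.
  unfold wordA. destruct (excluded_middle_informative _) as [->|h]; simpl.
  - symmetry. exact (hom_one _ _ _ iota_hom).
  - apply gmul1r.
Qed.
Lemma pi_evalG_letters w : pi (evalG (map inr w)) = phiH w.
Proof.
  induction w as [|x w IH]; simpl; [now rewrite (hom_one _ _ _ pi_hom)|].
  rewrite pi_hom, IH, pi_lift, <- phiH_app. reflexivity.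
Qed.

Lemma evalG_sound u v : cong gS (relS A I lt commutator_fs conj_aut) u v -> evalG u = evalG v.
Proof.
  induction 1 as [u l r v Hrel | w | w1 w2 _ IH | w1 w2 w3 _ IH1 _ IH2];
    [|reflexivity | now symmetry | congruence].
  rewrite !evalG_app. do 2 f_equal.
  destruct Hrel as [[a [a' [-> ->]]] | [[a [i [e [-> ->]]]] | [[p [q [e [d [hqp [-> ->]]]]]] | [q [e [-> ->]]]]]].
  - rewrite evalG_wordA, iota_hom. simpl. now rewrite gmul1r.
  - change (inr (i, e) :: wordA A I (conj_aut i e (proj1_sig a)))
      with ([@inr {a : A | a <> gone} _ (i, e)] ++ wordA A I (conj_aut i e (proj1_sig a))).
    rewrite evalG_app, evalG_wordA, iota_conj. simpl. now autorewrite with grp.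
  - rewrite evalG_app, evalG_wordA, iota_commutator by exact hqp. simpl. now autorewrite with grp.
  - simpl. change (q, negb e) with (fst (q, e), negb (snd (q, e))).
    rewrite lift_neg. now autorewrite with grp.
Qed.

Lemma evalG_surj g : exists w, evalG w = g.
Proof.
  destruct (phiH_surj (pi g)) as [w hw].
  assert (hk : pi (gmul (ginv (evalG (map inr w))) g) = gone).
  { rewrite pi_hom, (hom_inv _ _ _ pi_hom), pi_evalG_letters, hw. apply gmulVl. }
  apply pi_ker in hk. destruct hk as [a ha]. exists (map inr w ++ wordA A I a).
  rewrite evalG_app, evalG_wordA, <- ha. now autorewrite with grp.
Qed.

Lemma evalG_separates_letters r r' a a' :
  evalG (map inr r ++ wordA A I a) = evalG (map inr r' ++ wordA A I a') ->
  cong (letter I) (relB I lt) r r'.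
Proof.
  intro E. apply phiH_ker. apply (f_equal pi) in E.
  rewrite !evalG_app, !pi_hom, !pi_evalG_letters, !evalG_wordA in E.
  assert (Hk : forall b, pi (iota b) = gone) by (intro b; apply pi_ker; eauto).
  now rewrite !Hk, !gmul1r in E.
Qed.
Lemma evalG_separates_A r a a' :
  evalG (map inr r ++ wordA A I a) = evalG (map inr r ++ wordA A I a') -> a = a'.
Proof. rewrite !evalG_app, !evalG_wordA. intro E. now apply iota_inj, (gmul_cancel_l _ _ _ _ E). Qed.

Lemma presents_by_commutators : presents G gS (relS A I lt commutator_fs conj_aut).
Proof.
  exists evalG. split; [reflexivity|]. split; [exact evalG_app|]. split; [exact evalG_surj|].
  intros u v. split; [|apply evalG_sound].
  destruct commutator_conditions as [aut [c1 [c2 [c3 [c4 c5]]]]].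
  exact (faithful_of_normal_forms A I lt lt_irrefl lt_trans lt_total _ _
    (fun i e => proj1 (aut i e)) c1 c2 c3 c4 c5 G evalG evalG_sound
    evalG_separates_letters evalG_separates_A u v).
Qed.
End ExtensionData.

Lemma conditions_of_extension (A G : Group) (I : Type) (lt : I -> I -> Prop)
  (lt_irrefl : forall i, ~ lt i i)
  (lt_trans : forall i j k, lt i j -> lt j k -> lt i k)
  (lt_total : forall i j, lt i j \/ i = j \/ lt j i) :
  schreier_ext A G I lt ->
  exists fs psi, factor_conditions A I lt fs psi /\ presents G (genS A I) (relS A I lt fs psi).
Proof.
  intros [H [iota [pi [iota_hom [iota_inj [pi_hom [pi_surj [pi_ker pres]]]]]]]].
  destruct pres as [phiH [phiH_nil [phiH_app [phiH_surj phiH_ker]]]].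
  exists (commutator_fs A G H I iota pi phiH pi_surj), (conj_aut A G H I iota pi phiH pi_surj).
  split; [eapply commutator_conditions | eapply presents_by_commutators]; eassumption.
Qed.

Theorem theorem2p6 (A G : Group) (I : Type) (lt : I -> I -> Prop)
  (lt_irrefl : forall i, ~ lt i i)
  (lt_trans : forall i j k, lt i j -> lt j k -> lt i k)
  (lt_total : forall i j, lt i j \/ i = j \/ lt j i) :
  schreier_ext A G I lt <->
  exists (fs : I -> bool -> I -> bool -> A) (psi : I -> bool -> A -> A),
    (forall i e, is_aut A (psi i e)) /\
    (* 1 *)
    (forall p q r e d g, lt q p -> lt r q ->
       gmul (gmul (fs p e q d) (psi q d (fs p e r g))) (fs q d r g) =
       gmul (gmul (psi p e (fs q d r g)) (fs p e r g)) (psi r g (fs p e q d))) /\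
    (* 2 *)
    (forall p q e d, lt q p ->
       gmul (fs p e q (negb d)) (psi q (negb d) (fs p e q d)) = gone) /\
    (* 3 *)
    (forall p q e d, lt q p ->
       gmul (psi p (negb e) (fs p e q d)) (fs p (negb e) q d) = gone) /\
    (* 4 *)
    (forall p q e d (a : A), lt q p ->
       gmul (psi p e (psi q d a)) (fs p e q d) =
       gmul (fs p e q d) (psi q d (psi p e a))) /\
    (* 5 *)
    (forall r e (a : A), psi r (negb e) (psi r e a) = a) /\
    presents G (genS A I) (relS A I lt fs psi).
Proof.
  split.
  - intro ext.
    destruct (conditions_of_extension A G I lt lt_irrefl lt_trans lt_total ext)
      as [fs [psi [[aut [c1 [c2 [c3 [c4 c5]]]]] pres]]].
    exists fs, psi. do 6 (split; [assumption|]). exact pres.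
  - intros [fs [psi [aut [c1 [c2 [c3 [c4 [c5 pres]]]]]]]].
    apply (extension_of_conditions A G I lt lt_irrefl lt_trans lt_total fs psi);
      [exact (conj aut (conj c1 (conj c2 (conj c3 (conj c4 c5))))) | exact pres].
Qed.
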